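(* Let $K$ be a field of characteristic $p>0$ with $[K:K^p]<\infty$, and let $D$ be a derivation of $K$ of order $p^n$. Then the field extension $K/K^D$ has degree $p^n$, there exists $t\in K$ with $D(t)=1$, and $\mathrm{Im}(D^i)=\ker(D^{p^n-i})$ for every $i=1,\dots,p^n$.
   Context: $K^D=\{x\in K\mid D(x)=0\}$, a subfield of $K$ over which $D$ is linear. A derivation $D$ of $K$ has order $r$ if it is nilpotent of index $r$, i.e. $D^r=0$ and $D^{r-1}\neq0$. *)

From HB Require Import structures.
From mathcomp Require Import all_boot all_order all_algebra.
Set Implicit Arguments. Unset Strict Implicit. Unset Printing Implicit Defensive.
Import GRing.Theory.
Local Open Scope ring_scope.

Definition spans_over (K : fieldType) (S : K -> Prop) (s : seq K) : Prop :=
  forall x : K, exists c : seq K,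
    size c = size s /\ (forall i, S c`_i) /\
    x = \sum_(i < size s) c`_i * s`_i.

Definition free_over (K : fieldType) (S : K -> Prop) (s : seq K) : Prop :=
  forall c : seq K, size c = size s -> (forall i, S c`_i) ->
    \sum_(i < size s) c`_i * s`_i = 0 -> forall i, c`_i = 0.

Definition finite_degree_over (K : fieldType) (S : K -> Prop) : Prop :=
  exists s : seq K, spans_over S s.

Definition degree_over_eq (K : fieldType) (S : K -> Prop) (d : nat) : Prop :=
  exists s : seq K, size s = d /\ free_over S s /\ spans_over S s.

Definition pth_powers (K : fieldType) (p : nat) : K -> Prop :=
  fun x => exists y : K, x = y ^+ p.

Definition derivation (K : fieldType) (D : K -> K) : Prop :=
  (forall x y, D (x + y) = D x + D y) /\ (forall x y, D (x * y) = D x * y + x * D y).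

Definition constants (K : fieldType) (D : K -> K) : K -> Prop := fun x => D x = 0.

Definition has_order (K : fieldType) (D : K -> K) (r : nat) : Prop :=
  (forall x, iter r D x = 0) /\ ~ (forall x, iter r.-1 D x = 0).

From HB Require Import structures.
From mathcomp Require Import all_boot all_order all_algebra.
From Stdlib Require Import Classical.
From mathcomp Require Import zify.
Set Implicit Arguments.
Unset Strict Implicit.
Unset Printing Implicit Defensive.

Import GRing.Theory.
Local Open Scope ring_scope.

(* Let r be the order of D.  Every D^(r-1) x is a constant and D^(r-1) <> 0,
   so dividing by a nonzero one gives e with D^(r-1) e = 1.  Then e, De, ...,
   D^(r-1) e is a basis of K over K^D: applying D^(r-1-m) to a relation isolates
   its lowest coefficient; and if D^(k+1) x = 0 then a := D^k x is a constant and
   x - a D^(r-k-1) e is killed by D^k, which gives spanning by induction on k.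
   As a D^(r-k-1) e = D^(r-k-1) (a e), the same induction shows
   ker D^(k+1) = Im D^(r-k-1).  The characteristic only serves to make r = p^n
   at least 2, which gives t with D t = 1. *)

Section Derivation.
Variables (K : fieldType) (D : K -> K).
Hypothesis derD : derivation D.

Lemma derivationD x y : D (x + y) = D x + D y.
Proof. exact: derD.1. Qed.

Lemma derivationM x y : D (x * y) = D x * y + x * D y.
Proof. exact: derD.2. Qed.

Lemma derivation0 : D 0 = 0.
Proof. by apply/(addrI (D 0)); rewrite -derivationD !addr0. Qed.

Lemma derivation1 : D 1 = 0.
Proof.
have := derivationM 1 1; rewrite !mulr1 mul1r => D1.
by apply/(addrI (D 1)); rewrite addr0 -D1.
Qed.

Lemma derivationV c : D c = 0 -> D c^-1 = 0.
Proof.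
move=> Dc; have [-> | c0] := eqVneq c 0; first by rewrite invr0 derivation0.
have := derivationM c c^-1; rewrite divff // derivation1 Dc mul0r add0r.
by move/esym/eqP; rewrite mulf_eq0 (negbTE c0) => /eqP.
Qed.

Lemma iter_derivation0 k : iter k D 0 = 0.
Proof. by elim: k => //= k ->; rewrite derivation0. Qed.

Lemma iter_derivationD k x y : iter k D (x + y) = iter k D x + iter k D y.
Proof. by elim: k => //= k ->; rewrite derivationD. Qed.

Lemma iter_derivationB k x y : iter k D (x - y) = iter k D x - iter k D y.
Proof.
by apply/(addIr (iter k D y)); rewrite -iter_derivationD !subrK.
Qed.

Lemma iter_derivation_sum k r (F : 'I_r -> K) :
  iter k D (\sum_(i < r) F i) = \sum_(i < r) iter k D (F i).
Proof. exact: (big_morph (iter k D) (iter_derivationD k) (iter_derivation0 k)). Qed.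

Lemma iter_derivation_mulc k c x : D c = 0 -> iter k D (c * x) = c * iter k D x.
Proof.
by move=> Dc; elim: k => //= k ->; rewrite derivationM Dc mul0r add0r.
Qed.

Section Nilpotent.
Variables (r : nat) (e : K).
Hypothesis Dr0 : forall x, iter r D x = 0.
Hypothesis De : iter r.-1 D e = 1.

Lemma iter_derivation_ge j x : (r <= j)%N -> iter j D x = 0.
Proof. by move=> rj; rewrite -(subnK rj) iterD Dr0 iter_derivation0. Qed.

Lemma iter_derivation_basis k : (k < r)%N -> iter k D (iter (r - k.+1) D e) = 1.
Proof. by move=> kr; rewrite -iterD -De; congr iter; lia. Qed.

Lemma iter_derivation_sub_lead k x : (k < r)%N -> iter k.+1 D x = 0 ->
  iter k D (x - iter k D x * iter (r - k.+1) D e) = 0.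
Proof.
move=> kr Dx; rewrite iter_derivationB iter_derivation_mulc ?iterS //.
by rewrite iter_derivation_basis // mulr1 subrr.
Qed.

Lemma ker_iter_derivation_image k x : (k <= r)%N -> iter k D x = 0 ->
  exists y, x = iter (r - k) D y.
Proof.
elim: k x => [|k IHk] x kr Dx; first by exists 0; rewrite iter_derivation0.
have [y Dy] := IHk _ (ltnW kr) (iter_derivation_sub_lead kr Dx).
exists (D y + iter k D x * e).
rewrite iter_derivationD iter_derivation_mulc -?iterS // -iterSr.
by rewrite (_ : (r - k.+1).+1 = r - k)%N ?subnSK // -Dy subrK.
Qed.

Lemma ker_iter_derivation_span k x : (k <= r)%N -> iter k D x = 0 ->
  exists2 c : nat -> K, (forall i, D (c i) = 0) &
    x = \sum_(i < r) c i * iter i D e.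
Proof.
elim: k x => [|k IHk] x kr Dx.
  exists (fun=> 0) => [i|]; first exact: derivation0.
  by rewrite /= in Dx; rewrite Dx big1 // => i _; rewrite mul0r.
have [c Dc xE] := IHk _ (ltnW kr) (iter_derivation_sub_lead kr Dx).
set a := iter k D x in xE *; set m := (r - k.+1)%N in xE.
have mr : (m < r)%N by rewrite /m; lia.
exists (fun i => c i + (if i == m then a else 0)) => [i|].
  by rewrite derivationD Dc add0r; case: ifP; rewrite ?derivation0 // -iterS.
rewrite -[x](subrK (a * iter m D e)) xE.
under [RHS]eq_bigr do rewrite mulrDl.
rewrite big_split /=; congr (_ + _).
rewrite (bigD1 (Ordinal mr)) //= eqxx big1 ?addr0 // => i /negbTE im.
by rewrite (_ : (i == m :> nat) = false) ?mul0r // -im; apply/eqP/eqP => [/val_inj|->].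
Qed.

Lemma iter_derivation_sum_lowest (c : nat -> K) m :
  (m < r)%N -> (forall i, D (c i) = 0) -> (forall i, (i < m)%N -> c i = 0) ->
  iter (r.-1 - m) D (\sum_(i < r) c i * iter i D e) = c m.
Proof.
move=> mr Dc c_lt; rewrite iter_derivation_sum (bigD1 (Ordinal mr)) //=.
rewrite iter_derivation_mulc // -iterD (_ : r.-1 - m + m = r.-1)%N; last by lia.
rewrite De mulr1 big1 ?addr0 // => i /eqP im; rewrite iter_derivation_mulc //.
have [il|il|ieq] := ltngtP i m; last by case: im; apply: val_inj.
  by rewrite c_lt ?mul0r.
by rewrite -iterD iter_derivation_ge ?mulr0 //; lia.
Qed.

Lemma free_iter_derivation (c : nat -> K) : (forall i, D (c i) = 0) ->
  \sum_(i < r) c i * iter i D e = 0 -> forall i, (i < r)%N -> c i = 0.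
Proof.
move=> Dc sum0; elim/ltn_ind=> i IHi ir.
rewrite -(iter_derivation_sum_lowest ir Dc) ?sum0 ?iter_derivation0 // => j ji.
exact: IHi ji (ltn_trans ji ir).
Qed.

Lemma degree_constants : degree_over_eq (constants D) r.
Proof.
exists (mkseq (fun i => iter i D e) r); rewrite size_mkseq; split=> //; split.
- move=> c; rewrite size_mkseq => sc Dc sum0 i.
  have [ir|ri] := ltnP i r; last by rewrite nth_default ?sc.
  apply: (free_iter_derivation Dc) => //; apply: etrans sum0.
  by apply: eq_bigr => j _; rewrite nth_mkseq.
- move=> x; have [c Dc ->] := ker_iter_derivation_span (leqnn r) (Dr0 x).
  exists (mkseq c r); rewrite !size_mkseq; split=> //; split.
    move=> i; have [ir|ri] := ltnP i r; first by rewrite nth_mkseq.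
    by rewrite nth_default ?size_mkseq // /constants derivation0.
  by apply: eq_bigr => i _; rewrite !nth_mkseq.
Qed.

Lemma image_iter_derivation i x : (i <= r)%N ->
  (exists y, x = iter i D y) <-> iter (r - i) D x = 0.
Proof.
move=> ir; split=> [[y ->]|Dx]; first by rewrite -iterD subnK.
by have [y ->] := ker_iter_derivation_image (leq_subr i r) Dx; exists y; rewrite subKn.
Qed.

End Nilpotent.

Lemma exists_iter_derivation_eq1 r : (0 < r)%N -> (forall x, iter r D x = 0) ->
  ~ (forall x, iter r.-1 D x = 0) -> exists e, iter r.-1 D e = 1.
Proof.
move=> r_gt0 Dr0 /not_all_ex_not[y /eqP Dy].
have Dc : D (iter r.-1 D y) = 0 by rewrite -iterS prednK.
by exists ((iter r.-1 D y)^-1 * y); rewrite iter_derivation_mulc ?mulVf ?derivationV.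
Qed.

End Derivation.

Theorem lemma4p3 (K : fieldType) (p n : nat) (D : K -> K) :
  p \in [pchar K] ->
  finite_degree_over (@pth_powers K p) ->
  (0 < n)%N ->
  derivation D ->
  has_order D (p ^ n) ->
  [/\ degree_over_eq (constants D) (p ^ n),
      exists t : K, D t = 1
    & forall i : nat, (1 <= i <= p ^ n)%N ->
        forall x : K, (exists y : K, x = iter i D y) <-> iter (p ^ n - i) D x = 0].
Proof.
move=> pcharK _ n_gt0 derD [Dr0 Dr1_neq0].
have p_gt1 := prime_gt1 (pcharf_prime pcharK).
have r_gt1 : (1 < p ^ n)%N by rewrite -(expn0 p) ltn_exp2l.
have r_gt0 := ltnW r_gt1.
have [e De] := exists_iter_derivation_eq1 derD r_gt0 Dr0 Dr1_neq0.
split.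
- exact: (degree_constants derD Dr0 De).
- have r_pred : ((p ^ n).-2.+1 = (p ^ n).-1)%N by lia.
  by exists (iter (p ^ n).-2 D e); rewrite -iterS r_pred.
- by move=> i /andP[_ ir] x; exact (image_iter_derivation derD Dr0 De x ir).
Qed.
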